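(* Let $X$ be a uniformly smooth Banach space and let $\{S_i\}_{i=1}^\infty$ be a family of nonempty subsets of $X$ such that $a\in\bigcap_{i=1}^\infty\operatorname{conv} S_i$ and $D=\sup_i\operatorname{diam} S_i<\infty$. Then there exists a sequence $\{x_i\}_{i=1}^\infty$ with $x_i\in S_i$ for every $i$ such that, for every $k\in\mathbb{N}$, the vector $a_k=\frac1k\sum_{i=1}^k x_i$ satisfies $$\|a-a_k\|\le \frac{2e^2}{k\,\rho_X^{-1}(1/k)}\,D .$$
   Context: The modulus of smoothness of a Banach space $X$ is $\rho_X(\tau)=\sup\{\tfrac12(\|x+\tau y\|+\|x-\tau y\|)-1 : \|x\|=\|y\|=1\}$ for $\tau\ge 0$. $X$ is uniformly smooth if $\rho_X(t)=o(t)$ as $t\to0$. The function $\rho_X$ is convex, strictly increasing and continuous on $[0,\infty)$, with $\rho_X(0)=0$, and it satisfies $\sqrt{1+\tau^2}-1\le\rho_X(\tau)$. Consequently it is a bijection of $[0,\infty)$ onto itself, and $\rho_X^{-1}$ denotes its inverse function. $\operatorname{conv}$ denotes the convex hull, and $\operatorname{diam} S=\sup_{x,y\in S}\|x-y\|$. *)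

From Stdlib Require Import Reals Lra List ClassicalEpsilon.
Open Scope R_scope.

Record NormedSpace := {
  V :> Type;
  vadd : V -> V -> V;
  vzero : V;
  vopp : V -> V;
  vscal : R -> V -> V;
  vnorm : V -> R;
  vadd_assoc : forall x y z, vadd x (vadd y z) = vadd (vadd x y) z;
  vadd_comm : forall x y, vadd x y = vadd y x;
  vadd_0l : forall x, vadd vzero x = x;
  vadd_oppr : forall x, vadd x (vopp x) = vzero;
  vscal_addr : forall c x y, vscal c (vadd x y) = vadd (vscal c x) (vscal c y);
  vscal_addl : forall c d x, vscal (c + d) x = vadd (vscal c x) (vscal d x);
  vscal_assoc : forall c d x, vscal c (vscal d x) = vscal (c * d) x;
  vscal_1 : forall x, vscal 1 x = x;
  vnorm_eq0 : forall x, vnorm x = 0 -> x = vzero;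
  vnorm_scal : forall c x, vnorm (vscal c x) = Rabs c * vnorm x;
  vnorm_triangle : forall x y, vnorm (vadd x y) <= vnorm x + vnorm y
}.

Arguments vadd {_}. Arguments vzero {_}. Arguments vopp {_}.
Arguments vscal {_}. Arguments vnorm {_}.

Definition vsub {X : NormedSpace} (x y : X) : X := vadd x (vopp y).

Definition Banach (X : NormedSpace) : Prop :=
  forall u : nat -> X,
    (forall eps, 0 < eps -> exists N, forall m n, (N <= m)%nat -> (N <= n)%nat ->
        vnorm (vsub (u m) (u n)) < eps) ->
    exists l : X, forall eps, 0 < eps -> exists N, forall n, (N <= n)%nat ->
        vnorm (vsub (u n) l) < eps.

(* Supremum of a set of reals (0 if empty or unbounded; only used where it exists). *)
Definition Rsup_set (E : R -> Prop) : R :=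
  match excluded_middle_informative (bound E /\ exists r, E r) with
  | left H => proj1_sig (completeness E (proj1 H) (proj2 H))
  | right _ => 0
  end.

Definition smooth_set (X : NormedSpace) (tau : R) (r : R) : Prop :=
  exists x y : X, vnorm x = 1 /\ vnorm y = 1 /\
    r = (vnorm (vadd x (vscal tau y)) + vnorm (vsub x (vscal tau y))) / 2 - 1.

Definition rho (X : NormedSpace) (tau : R) : R := Rsup_set (smooth_set X tau).

Definition rho_inv (X : NormedSpace) (s : R) : R :=
  epsilon (inhabits 0) (fun t => 0 <= t /\ rho X t = s).

Definition uniformly_smooth (X : NormedSpace) : Prop :=
  forall eps, 0 < eps -> exists delta, 0 < delta /\
    forall t, 0 < t -> t < delta -> rho X t <= eps * t.

Definition vsum {X : NormedSpace} (l : list X) : X := fold_right vadd vzero l.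

Fixpoint psum {X : NormedSpace} (x : nat -> X) (k : nat) : X :=
  match k with
  | O => vzero
  | S k' => vadd (psum x k') (x k')
  end.

Definition conv {X : NormedSpace} (S : X -> Prop) (a : X) : Prop :=
  exists l : list (R * X),
    Forall (fun p => 0 <= fst p /\ S (snd p)) l /\
    fold_right Rplus 0 (map fst l) = 1 /\
    a = vsum (map (fun p => vscal (fst p) (snd p)) l).

Definition diam {X : NormedSpace} (S : X -> Prop) : R :=
  Rsup_set (fun r => exists x y, S x /\ S y /\ r = vnorm (vsub x y)).

From Stdlib Require Import Reals Lra Lia List ClassicalEpsilon Classical.
Open Scope R_scope.

(* Write u_n = n a - (x_0 + ... + x_{n-1}) for the deviation of the n-th
   partial sum from n a.  The points are chosen greedily: since a is a convex
   combination sum l_j y_j of points y_j of S_n, and for ||z|| <= D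
       ||u + z|| + ||u - z|| <= 2 ||u|| (1 + rho_X(D / ||u||)),
   averaging this over z = a - y_j (where the average of ||u - z|| is at least
   ||u||) gives some y in S_n with ||u + a - y|| <= ||u|| (1 + 2 rho_X(D/||u||)).
   Together with the trivial bound ||u_{n+1}|| <= ||u_n|| + D, a threshold
   argument at the level D / tau, tau = rho_X^{-1}(1/k), shows that
   ||u_k|| grows at most like (D/tau + D)(1 + 2/k)^(k-1) <= 2 e^2 D / tau. *)

Lemma vadd_0r {X : NormedSpace} (x : X) : vadd x vzero = x.
Proof. rewrite vadd_comm; apply vadd_0l. Qed.

Lemma vadd_cancel_l {X : NormedSpace} (x y z : X) : vadd x y = vadd x z -> y = z.
Proof.
  intro H. apply (f_equal (vadd (vopp x))) in H.
  rewrite !vadd_assoc, (vadd_comm _ (vopp x) x), vadd_oppr, !vadd_0l in H. exact H.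
Qed.

Lemma vscal_0l {X : NormedSpace} (x : X) : vscal 0 x = vzero.
Proof.
  apply (vadd_cancel_l (vscal 0 x)). rewrite vadd_0r, <- vscal_addl. f_equal; ring.
Qed.

Lemma vscal_0r {X : NormedSpace} (c : R) : vscal c (@vzero X) = vzero.
Proof. rewrite <- (vscal_0l vzero) at 1. rewrite vscal_assoc, Rmult_0_r. apply vscal_0l. Qed.

Lemma vopp_scal {X : NormedSpace} (x : X) : vopp x = vscal (-1) x.
Proof.
  apply (vadd_cancel_l x). rewrite vadd_oppr. rewrite <- (vscal_1 _ x) at 1.
  rewrite <- vscal_addl. replace (1 + -1) with 0 by ring. now rewrite vscal_0l.
Qed.

Lemma vscal_oppl {X : NormedSpace} (c : R) (x : X) : vscal (-c) x = vopp (vscal c x).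
Proof. rewrite vopp_scal, vscal_assoc. f_equal; ring. Qed.

Lemma vscal_oppr {X : NormedSpace} (c : R) (x : X) : vscal c (vopp x) = vopp (vscal c x).
Proof. rewrite !vopp_scal, !vscal_assoc. f_equal; ring. Qed.

Lemma vopp_add {X : NormedSpace} (x y : X) : vopp (vadd x y) = vadd (vopp x) (vopp y).
Proof. rewrite !vopp_scal. apply vscal_addr. Qed.

Lemma vopp_opp {X : NormedSpace} (x : X) : vopp (vopp x) = x.
Proof. rewrite !vopp_scal, vscal_assoc. replace (-1 * -1) with 1 by ring. apply vscal_1. Qed.

Lemma vadd_swap_mid {X : NormedSpace} (a b c d : X) :
  vadd (vadd a b) (vadd c d) = vadd (vadd a c) (vadd b d).
Proof. rewrite <- !vadd_assoc. f_equal. rewrite !vadd_assoc. f_equal. apply vadd_comm. Qed.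

Lemma vnorm_0 {X : NormedSpace} : vnorm (@vzero X) = 0.
Proof. rewrite <- (vscal_0l vzero), vnorm_scal, Rabs_R0. ring. Qed.

Lemma vnorm_opp {X : NormedSpace} (x : X) : vnorm (vopp x) = vnorm x.
Proof.
  rewrite vopp_scal, vnorm_scal. replace (Rabs (-1)) with 1 by (rewrite Rabs_left; lra). ring.
Qed.

Lemma vnorm_ge0 {X : NormedSpace} (x : X) : 0 <= vnorm x.
Proof.
  pose proof (vnorm_triangle _ x (vopp x)) as H. rewrite vadd_oppr, vnorm_0, vnorm_opp in H. lra.
Qed.

Lemma vnorm_comb_le {X : NormedSpace} (l m : R) (p q : X) :
  vnorm (vadd (vscal l p) (vscal m q)) <= Rabs l * vnorm p + Rabs m * vnorm q.
Proof. rewrite <- !vnorm_scal. apply vnorm_triangle. Qed.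

Lemma vnorm_normalize {X : NormedSpace} (u : X) : 0 < vnorm u -> vnorm (vscal (/ vnorm u) u) = 1.
Proof. intro H. rewrite vnorm_scal, Rabs_pos_eq by (left; apply Rinv_0_lt_compat; lra). field. lra. Qed.

Lemma no_unit_vector_norm_0 {X : NormedSpace} :
  ~ (exists e : X, vnorm e = 1) -> forall v : X, vnorm v = 0.
Proof.
  intros Hn v. destruct (Req_dec (vnorm v) 0) as [|Hv]; [assumption|].
  exfalso. apply Hn. exists (vscal (/ vnorm v) v). apply vnorm_normalize.
  pose proof (vnorm_ge0 v). lra.
Qed.

Lemma Rsup_set_lub (E : R -> Prop) : bound E -> (exists r, E r) -> is_lub E (Rsup_set E).
Proof.
  intros Hb He. unfold Rsup_set.
  destruct (excluded_middle_informative (bound E /\ exists r, E r)) as [H|H].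
  - exact (proj2_sig (completeness E (proj1 H) (proj2 H))).
  - exfalso; tauto.
Qed.

Lemma smooth_set_le_abs {X : NormedSpace} tau r : smooth_set X tau r -> r <= Rabs tau.
Proof.
  intros (x & y & Hx & Hy & ->).
  pose proof (vnorm_triangle _ x (vscal tau y)) as H1.
  pose proof (vnorm_triangle _ x (vopp (vscal tau y))) as H2.
  unfold vsub. rewrite vnorm_opp, vnorm_scal, Hx, Hy in *. lra.
Qed.

Lemma smooth_set_diag {X : NormedSpace} (e : X) tau : vnorm e = 1 ->
  smooth_set X tau ((Rabs (1 + tau) + Rabs (1 - tau)) / 2 - 1).
Proof.
  intro He. exists e, e. split; [exact He|]. split; [exact He|].
  assert (E1 : vadd e (vscal tau e) = vscal (1 + tau) e) by (rewrite vscal_addl, vscal_1; reflexivity).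
  assert (E2 : vsub e (vscal tau e) = vscal (1 - tau) e).
  { unfold vsub, Rminus. rewrite <- vscal_oppl, vscal_addl, vscal_1. reflexivity. }
  rewrite E1, E2, !vnorm_scal, He, !Rmult_1_r. reflexivity.
Qed.

(* Convexity of the norm: t |-> ||x + t y|| + ||x - t y|| is nondecreasing on [0, oo),
   since for 0 <= s <= t both x +- s y are convex combinations of x + t y and x - t y. *)
Lemma smooth_sum_mono {X : NormedSpace} (x y : X) s t : 0 <= s <= t ->
  vnorm (vadd x (vscal s y)) + vnorm (vsub x (vscal s y)) <=
  vnorm (vadd x (vscal t y)) + vnorm (vsub x (vscal t y)).
Proof.
  intros Hst. destruct (Req_dec t 0) as [Ht|Ht].
  { assert (s = 0) by lra. subst. lra. }
  set (l := (t + s) / (2 * t)).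
  assert (Hl : 0 <= l <= 1).
  { unfold l. split; [apply Rmult_le_pos; [lra| left; apply Rinv_0_lt_compat; lra]|].
    apply (Rmult_le_reg_r (2 * t)); [lra|]. unfold Rdiv. rewrite Rmult_assoc, Rinv_l by lra. lra. }
  set (A := vadd x (vscal t y)). set (B := vsub x (vscal t y)).
  assert (G : forall c d : R,
    vadd (vscal c A) (vscal d B) = vadd (vscal (c + d) x) (vscal (c * t - d * t) y)).
  { intros c d. unfold A, B, vsub. rewrite !vscal_addr, <- vscal_oppl, !vscal_assoc, vadd_swap_mid.
    rewrite <- !vscal_addl. f_equal; f_equal; ring. }
  assert (E1 : vadd x (vscal s y) = vadd (vscal l A) (vscal (1 - l) B)).
  { rewrite G. replace (l + (1 - l)) with 1 by ring. rewrite vscal_1.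
    f_equal. f_equal. unfold l. field. exact Ht. }
  assert (E2 : vsub x (vscal s y) = vadd (vscal (1 - l) A) (vscal l B)).
  { rewrite G. replace (1 - l + l) with 1 by ring. rewrite vscal_1. unfold vsub. f_equal.
    rewrite <- vscal_oppl. f_equal. unfold l. field. exact Ht. }
  rewrite E1, E2.
  pose proof (vnorm_comb_le l (1 - l) A B). pose proof (vnorm_comb_le (1 - l) l A B).
  rewrite (Rabs_pos_eq l), (Rabs_pos_eq (1 - l)) in * by lra.
  fold A B. lra.
Qed.

Section ModulusOfSmoothness.

Variable X : NormedSpace.
Variable e : X.
Hypothesis He : vnorm e = 1.

Lemma rho_lub tau : is_lub (smooth_set X tau) (rho X tau).
Proof.
  apply Rsup_set_lub.
  - exists (Rabs tau). intros r Hr. now apply smooth_set_le_abs in Hr.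
  - eexists; exact (smooth_set_diag e tau He).
Qed.

Lemma rho_pair_le (x y : X) tau : vnorm x = 1 -> vnorm y = 1 ->
  (vnorm (vadd x (vscal tau y)) + vnorm (vsub x (vscal tau y))) / 2 - 1 <= rho X tau.
Proof. intros Hx Hy. apply (proj1 (rho_lub tau)). exists x, y. auto. Qed.

Lemma rho_le_abs tau : rho X tau <= Rabs tau.
Proof. apply (proj2 (rho_lub tau)). intros r Hr. now apply smooth_set_le_abs in Hr. Qed.

Lemma rho_lower_bounds tau : 0 <= rho X tau /\ Rabs tau - 1 <= rho X tau.
Proof.
  pose proof (proj1 (rho_lub tau) _ (smooth_set_diag e tau He)) as H.
  unfold Rabs in *.
  destruct (Rcase_abs (1 + tau)); destruct (Rcase_abs (1 - tau)); destruct (Rcase_abs tau); lra.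
Qed.

Lemma rho_0 : rho X 0 = 0.
Proof. pose proof (rho_le_abs 0). pose proof (rho_lower_bounds 0). rewrite Rabs_R0 in *. lra. Qed.

Lemma rho_mono s t : 0 <= s <= t -> rho X s <= rho X t.
Proof.
  intros Hst. apply (proj2 (rho_lub s)). intros r (x & y & Hx & Hy & ->).
  pose proof (smooth_sum_mono x y s t Hst). pose proof (rho_pair_le x y t Hx Hy). lra.
Qed.

Lemma rho_lipschitz s t : rho X t <= rho X s + Rabs (t - s).
Proof.
  apply (proj2 (rho_lub t)). intros r (x & y & Hx & Hy & ->).
  pose proof (rho_pair_le x y s Hx Hy).
  assert (E1 : vadd x (vscal t y) = vadd (vadd x (vscal s y)) (vscal (t - s) y)).
  { rewrite <- vadd_assoc, <- vscal_addl. f_equal. f_equal. ring. }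
  assert (E2 : vsub x (vscal t y) = vadd (vsub x (vscal s y)) (vscal (-(t - s)) y)).
  { unfold vsub. rewrite <- vadd_assoc, <- !vscal_oppl, <- vscal_addl. f_equal. f_equal. ring. }
  pose proof (vnorm_triangle _ (vadd x (vscal s y)) (vscal (t - s) y)).
  pose proof (vnorm_triangle _ (vsub x (vscal s y)) (vscal (-(t - s)) y)).
  rewrite <- E1, <- E2, !vnorm_scal, Hy, Rabs_Ropp in *. lra.
Qed.

Lemma rho_continuous : continuity (rho X).
Proof.
  intros x eps Heps. exists eps. split; [exact Heps|].
  intros y [_ Hy]. simpl in *. unfold R_dist in *.
  pose proof (rho_lipschitz x y) as H1. pose proof (rho_lipschitz y x) as H2.
  rewrite Rabs_minus_sym in H2.
  unfold Rabs in *. destruct (Rcase_abs (rho X y - rho X x)); destruct (Rcase_abs (y - x)); lra.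
Qed.

(* By the intermediate value theorem on [0, s + 2], [rho_inv] is a genuine inverse. *)
Lemma rho_inv_spec s : 0 < s -> 0 <= rho_inv X s /\ rho X (rho_inv X s) = s.
Proof.
  intros Hs. unfold rho_inv. apply epsilon_spec.
  destruct (IVT (fun t => rho X t - s) 0 (s + 2)) as [z [Hz1 Hz2]].
  - intro t. apply continuity_pt_minus; [apply rho_continuous|].
    apply continuity_pt_const. intros ??; reflexivity.
  - lra.
  - rewrite rho_0. lra.
  - pose proof (rho_lower_bounds (s + 2)) as [_ H]. rewrite Rabs_pos_eq in H by lra. lra.
  - exists z. split; [lra|]. simpl in Hz2. lra.
Qed.

(* The two-point estimate: for ||z|| <= D, rescaling by ||u|| and applying the
   definition of rho_X together with its monotonicity. *)
Lemma smooth_pair_estimate (u z : X) D : 0 < vnorm u -> vnorm z <= D ->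
  vnorm (vadd u z) + vnorm (vsub u z) <= 2 * vnorm u * (1 + rho X (D / vnorm u)).
Proof.
  intros Hu Hz.
  assert (Hiu : 0 < / vnorm u) by (apply Rinv_0_lt_compat; lra).
  pose proof (rho_lower_bounds (D / vnorm u)) as [Hr0 _].
  destruct (Req_dec (vnorm z) 0) as [Hz0|Hz0].
  { apply vnorm_eq0 in Hz0. subst z. unfold vsub. rewrite vopp_scal, vscal_0r, vadd_0r. nra. }
  assert (Hzp : 0 < vnorm z) by (pose proof (vnorm_ge0 z); lra).
  set (u1 := vscal (/ vnorm u) u). set (z1 := vscal (/ vnorm z) z).
  set (s := vnorm z / vnorm u).
  assert (Hs : 0 <= s <= D / vnorm u).
  { unfold s, Rdiv. split; [apply Rmult_le_pos; lra|]. apply Rmult_le_compat_r; lra. }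
  pose proof (rho_pair_le u1 z1 s (vnorm_normalize u Hu) (vnorm_normalize z Hzp)) as H1.
  pose proof (rho_mono s (D / vnorm u) Hs) as H2.
  assert (Ez : vscal s z1 = vscal (/ vnorm u) z).
  { unfold z1, s. rewrite vscal_assoc. f_equal. field. split; lra. }
  assert (E1 : vadd u1 (vscal s z1) = vscal (/ vnorm u) (vadd u z)) by (rewrite Ez, vscal_addr; reflexivity).
  assert (E2 : vsub u1 (vscal s z1) = vscal (/ vnorm u) (vsub u z)).
  { rewrite Ez. unfold vsub. rewrite vscal_addr, vscal_oppr. reflexivity. }
  rewrite E1, E2, !vnorm_scal, Rabs_pos_eq in H1 by lra.
  assert (H3 : / vnorm u * (vnorm (vadd u z) + vnorm (vsub u z)) <= 2 * (1 + rho X (D / vnorm u))) by lra.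
  apply (Rmult_le_compat_l (vnorm u)) in H3; [|lra].
  rewrite <- Rmult_assoc, Rinv_r in H3 by lra. lra.
Qed.

End ModulusOfSmoothness.

Definition wsum {X : NormedSpace} (l : list (R * X)) (h : X -> R) : R :=
  fold_right Rplus 0 (map (fun p => fst p * h (snd p)) l).

Definition weight {X : NormedSpace} (l : list (R * X)) : R := fold_right Rplus 0 (map fst l).

Lemma wsum_le {X : NormedSpace} (l : list (R * X)) f g :
  (forall q, In q l -> 0 <= fst q) -> (forall q, In q l -> f (snd q) <= g (snd q)) ->
  wsum l f <= wsum l g.
Proof.
  induction l as [|p l IH]; intros H1 H2; [unfold wsum; simpl; lra|].
  assert (0 <= fst p) by (apply H1; left; auto).
  assert (f (snd p) <= g (snd p)) by (apply H2; left; auto).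
  assert (wsum l f <= wsum l g) by (apply IH; intros; [apply H1|apply H2]; right; auto).
  unfold wsum in *. simpl. nra.
Qed.

Lemma wsum_const {X : NormedSpace} (l : list (R * X)) C : wsum l (fun _ => C) = C * weight l.
Proof. unfold wsum, weight. induction l as [|p l IH]; simpl; [ring|]. rewrite IH. ring. Qed.

Lemma wsum_const_sub {X : NormedSpace} (l : list (R * X)) C g :
  wsum l (fun y => C - g y) = C * weight l - wsum l g.
Proof. unfold wsum, weight. induction l as [|p l IH]; simpl; [ring|]. rewrite IH. ring. Qed.

Lemma list_argmin {X : NormedSpace} (l : list (R * X)) (f : X -> R) : l <> nil ->
  exists p, In p l /\ forall q, In q l -> f (snd p) <= f (snd q).
Proof.
  induction l as [|p l IH]; intro Hn; [congruence|].
  destruct l as [|p' l'].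
  - exists p. split; [left; auto|]. intros q [<-|[]]. lra.
  - destruct IH as [m [Hm1 Hm2]]; [discriminate|].
    destruct (Rle_dec (f (snd p)) (f (snd m))).
    + exists p. split; [left; auto|]. intros q [<-|Hq]; [lra|]. specialize (Hm2 q Hq). lra.
    + exists m. split; [right; auto|]. intros q [<-|Hq]; [lra|]. auto.
Qed.

Lemma wsum_min {X : NormedSpace} (l : list (R * X)) (P : X -> Prop) f :
  Forall (fun p => 0 <= fst p /\ P (snd p)) l -> weight l = 1 ->
  exists y, P y /\ f y <= wsum l f.
Proof.
  intros HF Hs. rewrite Forall_forall in HF.
  destruct (list_argmin l f) as [p [Hp1 Hp2]]. { intros ->. unfold weight in Hs. simpl in Hs. lra. }
  exists (snd p). split; [apply HF; auto|].
  pose proof (wsum_le l (fun _ => f (snd p)) f) as H.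
  rewrite wsum_const, Hs, Rmult_1_r in H. apply H; [intros; apply HF; auto| auto].
Qed.

Lemma vsum_translate {X : NormedSpace} (l : list (R * X)) (c : X) :
  vsum (map (fun p => vscal (fst p) (vadd (snd p) c)) l) =
  vadd (vsum (map (fun p => vscal (fst p) (snd p)) l)) (vscal (weight l) c).
Proof.
  unfold weight. induction l as [|p l IH]; simpl.
  - rewrite vscal_0l, vadd_0l. reflexivity.
  - unfold vsum in *. simpl. rewrite IH, vscal_addr, vscal_addl. apply vadd_swap_mid.
Qed.

Lemma vnorm_vsum_le {X : NormedSpace} (l : list (R * X)) (g : X -> X) :
  (forall q, In q l -> 0 <= fst q) ->
  vnorm (vsum (map (fun p => vscal (fst p) (g (snd p))) l)) <= wsum l (fun y => vnorm (g y)).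
Proof.
  induction l as [|p l IH]; intro H; simpl.
  - rewrite vnorm_0. unfold wsum; simpl; lra.
  - set (rest := vsum (map (fun p => vscal (fst p) (g (snd p))) l)).
    pose proof (vnorm_triangle _ (vscal (fst p) (g (snd p))) rest) as Ht.
    rewrite vnorm_scal, Rabs_pos_eq in Ht by (apply H; left; auto).
    assert (vnorm rest <= wsum l (fun y => vnorm (g y))) by (apply IH; intros; apply H; right; auto).
    unfold vsum, wsum in *. simpl. lra.
Qed.

Lemma conv_dist_le {X : NormedSpace} (T : X -> Prop) a D (HaT : conv T a)
  (Hd : forall x y, T x -> T y -> vnorm (vsub x y) <= D) y : T y -> vnorm (vsub a y) <= D.
Proof.
  intro Hy. destruct HaT as (l & HF & Hs & Ha). fold (weight l) in Hs.
  assert (E : vsub a y = vsum (map (fun p => vscal (fst p) (vadd (snd p) (vopp y))) l)).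
  { rewrite vsum_translate, Hs, vscal_1, <- Ha. reflexivity. }
  rewrite E. rewrite Forall_forall in HF.
  eapply Rle_trans; [apply (vnorm_vsum_le l (fun z => vadd z (vopp y))); intros; apply HF; auto|].
  eapply Rle_trans; [apply (wsum_le l _ (fun _ => D)); intros; [apply HF; auto|]|].
  - apply Hd; [apply HF; auto| exact Hy].
  - rewrite wsum_const, Hs. lra.
Qed.

Lemma greedy_step {X : NormedSpace} (e : X) (He : vnorm e = 1) (T : X -> Prop) a D
  (HaT : conv T a) (Hd : forall x y, T x -> T y -> vnorm (vsub x y) <= D) (u : X) :
  exists x, T x /\
    (0 < vnorm u -> vnorm (vadd u (vsub a x)) <= vnorm u * (1 + 2 * rho X (D / vnorm u))).
Proof.
  pose proof HaT as (l & HF & Hs & Ha). fold (weight l) in Hs.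
  set (h := fun y => vnorm (vadd u (vsub a y))).
  destruct (wsum_min l T h HF Hs) as [y [Hy Hhy]].
  exists y. split; [exact Hy|]. intro Hu. fold (h y).
  set (C := 2 * vnorm u * (1 + rho X (D / vnorm u))).
  rewrite Forall_forall in HF.
  assert (Hupper : wsum l h <= wsum l (fun y => C - vnorm (vadd y (vsub u a)))).
  { apply wsum_le; [intros; apply HF; auto|]. intros q Hq. unfold h.
    pose proof (smooth_pair_estimate X e He u (vsub a (snd q)) D Hu
      (conv_dist_le T a D HaT Hd (snd q) (proj2 (HF q Hq)))) as Hq'.
    assert (E : vsub u (vsub a (snd q)) = vadd (snd q) (vsub u a)).
    { unfold vsub. rewrite vopp_add, vopp_opp, (vadd_comm _ (vopp a) (snd q)).
      rewrite vadd_assoc, (vadd_comm _ u (snd q)), <- vadd_assoc. reflexivity. }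
    rewrite E in Hq'. unfold C. lra. }
  rewrite wsum_const_sub, Hs in Hupper.
  assert (Hlower : vnorm u <= wsum l (fun y => vnorm (vadd y (vsub u a)))).
  { assert (E : u = vsum (map (fun p => vscal (fst p) (vadd (snd p) (vsub u a))) l)).
    { rewrite vsum_translate, Hs, vscal_1, <- Ha. unfold vsub.
      rewrite (vadd_comm _ u), vadd_assoc, vadd_oppr, vadd_0l. reflexivity. }
    rewrite E at 1. apply (vnorm_vsum_le l (fun z => vadd z (vsub u a))). intros; apply HF; auto. }
  unfold C in Hupper. lra.
Qed.

Definition deviation {X : NormedSpace} (a : X) (x : nat -> X) (n : nat) : X :=
  vsub (vscal (INR n) a) (psum x n).

Lemma deviation_0 {X : NormedSpace} (a : X) (x : nat -> X) : deviation a x 0 = vzero.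
Proof. unfold deviation. simpl. rewrite vscal_0l. apply vadd_oppr. Qed.

Lemma deviation_S {X : NormedSpace} (a : X) (x : nat -> X) n :
  deviation a x (S n) = vadd (deviation a x n) (vsub a (x n)).
Proof.
  unfold deviation, vsub. simpl psum. rewrite S_INR, vscal_addl, vscal_1, vopp_add.
  apply vadd_swap_mid.
Qed.

Lemma greedy_sequence {X : NormedSpace} (e : X) (He : vnorm e = 1)
  (T : nat -> X -> Prop) (a : X) (D : R) (HaT : forall i, conv (T i) a)
  (Hd : forall i x y, T i x -> T i y -> vnorm (vsub x y) <= D) :
  exists x : nat -> X, (forall i, T i (x i)) /\
    forall n, 0 < vnorm (deviation a x n) ->
      vnorm (deviation a x (S n)) <=
      vnorm (deviation a x n) * (1 + 2 * rho X (D / vnorm (deviation a x n))).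
Proof.
  assert (pick : forall (i : nat) (P : X), {x | T i x /\
     (0 < vnorm (vsub (vscal (INR i) a) P) ->
      vnorm (vadd (vsub (vscal (INR i) a) P) (vsub a x)) <=
      vnorm (vsub (vscal (INR i) a) P) * (1 + 2 * rho X (D / vnorm (vsub (vscal (INR i) a) P))))}).
  { intros i P. apply constructive_indefinite_description. exact (greedy_step e He _ a D (HaT i) (Hd i) _). }
  set (F := nat_rect (fun _ => X) vzero (fun n Fn => vadd Fn (proj1_sig (pick n Fn)))).
  set (x := fun n => proj1_sig (pick n (F n))).
  assert (HF : forall n, psum x n = F n).
  { induction n as [|n IH]; [reflexivity|]. simpl. rewrite IH. reflexivity. }
  exists x. split; [intro i; exact (proj1 (proj2_sig (pick i (F i))))|].
  intros n Hn. rewrite deviation_S. unfold deviation in *. rewrite HF in *.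
  exact (proj2 (proj2_sig (pick n (F n))) Hn).
Qed.

(* A real sequence that grows by at most D per step, and by at most the factor 1 + 2c
   once it exceeds D / tau (because then D / b_n <= tau), stays below
   (D / tau + D) (1 + 2c)^n. *)
Lemma threshold_growth (b : nat -> R) (r : R -> R) D tau c :
  0 <= D -> 0 < tau -> 0 <= c -> b 0%nat = 0 ->
  (forall n, b (S n) <= b n + D) ->
  (forall n, 0 < b n -> b (S n) <= b n * (1 + 2 * r (D / b n))) ->
  (forall s, 0 <= s <= tau -> r s <= c) ->
  forall n, b (S n) <= (D / tau + D) * (1 + 2 * c) ^ n.
Proof.
  intros HD Htau Hc Hb0 Hadd Hmul Hr.
  set (T := D / tau). set (q := 1 + 2 * c).
  assert (HT : 0 <= T) by (unfold T, Rdiv; apply Rmult_le_pos; [lra| left; apply Rinv_0_lt_compat; lra]).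
  induction n as [|n IH].
  - simpl. specialize (Hadd 0%nat). rewrite Hb0 in Hadd. lra.
  - destruct (Rle_dec (b (S n)) T) as [Hle|Hgt].
    + pose proof (pow_R1_Rle q (S n) ltac:(unfold q; lra)). specialize (Hadd (S n)).
      assert (0 <= T + D) by lra. nra.
    + apply Rnot_le_lt in Hgt.
      assert (Hbp : 0 < b (S n)) by lra.
      assert (HDb : D <= tau * b (S n)).
      { assert (D = tau * T) by (unfold T; field; lra). nra. }
      assert (Hs : 0 <= D / b (S n) <= tau).
      { split; [unfold Rdiv; apply Rmult_le_pos; [lra| left; apply Rinv_0_lt_compat; lra]|].
        apply (Rmult_le_reg_r (b (S n))); [lra|]. unfold Rdiv.
        rewrite Rmult_assoc, Rinv_l, Rmult_1_r by lra. lra. }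
      pose proof (Hr _ Hs) as Hrs. specialize (Hmul _ Hbp).
      assert (Hstep : b (S (S n)) <= b (S n) * q) by (unfold q; nra).
      simpl. rewrite (Rmult_comm q), <- Rmult_assoc.
      apply Rle_trans with (b (S n) * q); [exact Hstep| apply Rmult_le_compat_r; [unfold q; lra| exact IH]].
Qed.

Lemma exp_pow (y : R) (n : nat) : exp y ^ n = exp (INR n * y).
Proof.
  induction n as [|n IH]; simpl.
  - rewrite Rmult_0_l, exp_0. reflexivity.
  - rewrite IH, <- exp_plus. f_equal. destruct n; simpl; ring.
Qed.

(* (1 + c/n)^n <= e^c, from 1 + t <= e^t. *)
Lemma pow_one_plus_le_exp (c : R) (n : nat) : 0 <= c -> (1 <= n)%nat ->
  (1 + c / INR n) ^ n <= exp c.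
Proof.
  intros Hc Hn. assert (Hnp : 0 < INR n) by (apply lt_0_INR; lia).
  assert (0 <= c / INR n) by (unfold Rdiv; apply Rmult_le_pos; [lra| left; apply Rinv_0_lt_compat; lra]).
  apply Rle_trans with (exp (c / INR n) ^ n).
  - apply pow_incr. split; [lra| apply exp_ineq1_le].
  - rewrite exp_pow. right. f_equal. field. lra.
Qed.

Lemma recursion_bound (b : nat -> R) (r : R -> R) D k tau : 0 <= D -> b 0%nat = 0 ->
  (forall n, b (S n) <= b n + D) ->
  (forall n, 0 < b n -> b (S n) <= b n * (1 + 2 * r (D / b n))) ->
  (forall s t, 0 <= s <= t -> r s <= r t) -> (1 <= k)%nat -> 0 < tau -> r tau = / INR k ->
  tau <= 1 + / INR k -> b k <= 2 * exp 1 ^ 2 * D / tau.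
Proof.
  intros HD Hb0 Hadd Hmul Hmono Hk Htau Hrt Htau1.
  assert (Hkp : 0 < INR k) by (apply lt_0_INR; lia).
  assert (Hik : 0 < / INR k) by (apply Rinv_0_lt_compat; lra).
  set (q := 1 + 2 * / INR k).
  assert (Hgrowth := threshold_growth b r D tau (/ INR k) HD Htau ltac:(lra) Hb0 Hadd Hmul
    (fun s Hs => eq_ind _ (fun v => r s <= v) (Hmono s tau Hs) _ Hrt)).
  destruct k as [|m]; [lia|]. specialize (Hgrowth m). fold q in Hgrowth.
  assert (Hqk : q ^ S m <= exp 1 ^ 2).
  { rewrite exp_pow. replace (INR 2 * 1) with 2 by (simpl; ring).
    unfold q. replace (2 * / INR (S m)) with (2 / INR (S m)) by (unfold Rdiv; ring).
    apply pow_one_plus_le_exp; [lra| exact Hk]. }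
  assert (Hqm : 0 <= q ^ m) by (apply pow_le; unfold q; lra).
  assert (Hkey : (1 + tau) * q ^ m <= 2 * exp 1 ^ 2).
  { apply Rle_trans with (2 * q ^ S m); [simpl; unfold q in *; nra| lra]. }
  apply Rle_trans with (D / tau * ((1 + tau) * q ^ m)).
  - replace (D / tau * ((1 + tau) * q ^ m)) with ((D / tau + D) * q ^ m) by (field; lra).
    exact Hgrowth.
  - replace (2 * exp 1 ^ 2 * D / tau) with (D / tau * (2 * exp 1 ^ 2)) by (field; lra).
    apply Rmult_le_compat_l; [unfold Rdiv; apply Rmult_le_pos; [lra| left; apply Rinv_0_lt_compat; lra]| exact Hkey].
Qed.

Lemma greedy_average_bound {X : NormedSpace} (e : X) (He : vnorm e = 1)
  (T : nat -> X -> Prop) (a : X) (D : R) (HD0 : 0 <= D) (HaT : forall i, conv (T i) a)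
  (Hd : forall i x y, T i x -> T i y -> vnorm (vsub x y) <= D) :
  exists x : nat -> X, (forall i, T i (x i)) /\
    forall k : nat, (1 <= k)%nat ->
      vnorm (vsub a (vscal (/ INR k) (psum x k)))
        <= 2 * exp 1 ^ 2 / (INR k * rho_inv X (/ INR k)) * D.
Proof.
  destruct (greedy_sequence e He T a D HaT Hd) as [x [HxT Hmul]].
  exists x. split; [exact HxT|]. intros k Hk.
  set (b := fun n => vnorm (deviation a x n)).
  assert (Hadd : forall n, b (S n) <= b n + D).
  { intro n. unfold b. rewrite deviation_S. eapply Rle_trans; [apply vnorm_triangle|].
    pose proof (conv_dist_le (T n) a D (HaT n) (Hd n) (x n) (HxT n)). lra. }
  assert (Hkp : 0 < INR k) by (apply lt_0_INR; lia).
  assert (Hik : 0 < / INR k) by (apply Rinv_0_lt_compat; lra).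
  destruct (rho_inv_spec X e He (/ INR k) Hik) as [Ht0 Htr].
  set (tau := rho_inv X (/ INR k)) in *.
  assert (Htau : 0 < tau).
  { destruct Ht0 as [|Ht0]; [assumption|]. rewrite <- Ht0, (rho_0 X e He) in Htr. lra. }
  assert (Htau1 : tau <= 1 + / INR k).
  { pose proof (rho_lower_bounds X e He tau) as [_ H]. rewrite Rabs_pos_eq in H by lra. lra. }
  assert (Hb : b k <= 2 * exp 1 ^ 2 * D / tau).
  { apply (recursion_bound b (rho X) D k tau HD0); try assumption.
    - unfold b. rewrite deviation_0. apply vnorm_0.
    - exact (rho_mono X e He). }
  assert (E : vsub a (vscal (/ INR k) (psum x k)) = vscal (/ INR k) (deviation a x k)).
  { unfold deviation, vsub. rewrite vscal_addr, vscal_assoc, Rinv_l, vscal_1, vscal_oppr by lra.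
    reflexivity. }
  rewrite E, vnorm_scal, Rabs_pos_eq by lra. fold (b k).
  apply Rle_trans with (/ INR k * (2 * exp 1 ^ 2 * D / tau)).
  - apply Rmult_le_compat_l; lra.
  - right. field. split; lra.
Qed.

Lemma diam_lub {X : NormedSpace} (S : X -> Prop) :
  (exists x, S x) -> bound (fun r => exists x y, S x /\ S y /\ r = vnorm (vsub x y)) ->
  is_lub (fun r => exists x y, S x /\ S y /\ r = vnorm (vsub x y)) (diam S).
Proof.
  intros [x0 Hx0] Hb. apply Rsup_set_lub; [exact Hb|]. eexists; exists x0, x0; eauto.
Qed.

Theorem corollary1 (X : NormedSpace) (HB : Banach X) (Hus : uniformly_smooth X)
  (S : nat -> X -> Prop) (a : X) (D : R)
  (Hne : forall i, exists x, S i x)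
  (Ha : forall i, conv (S i) a)
  (HDdiam : forall i, bound (fun r => exists x y, S i x /\ S i y /\ r = vnorm (vsub x y)))
  (HD : is_lub (fun r => exists i, r = diam (S i)) D) :
  exists x : nat -> X, (forall i, S i (x i)) /\
    forall k : nat, (1 <= k)%nat ->
      vnorm (vsub a (vscal (/ INR k) (psum x k)))
        <= 2 * exp 1 ^ 2 / (INR k * rho_inv X (/ INR k)) * D.
Proof.
  assert (Hlub : forall i, is_lub _ (diam (S i))) by (intro i; exact (diam_lub (S i) (Hne i) (HDdiam i))).
  assert (Hd : forall i x y, S i x -> S i y -> vnorm (vsub x y) <= D).
  { intros i x y Hx Hy. apply Rle_trans with (diam (S i)).
    - apply (proj1 (Hlub i)). exists x, y; auto.
    - apply (proj1 HD). exists i; reflexivity. }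
  assert (HD0 : 0 <= D).
  { destruct (Hne 0%nat) as [x0 Hx0]. pose proof (Hd _ _ _ Hx0 Hx0). pose proof (vnorm_ge0 (vsub x0 x0)). lra. }
  destruct (classic (exists e : X, vnorm e = 1)) as [[e He]|Hn].
  - exact (greedy_average_bound e He S a D HD0 Ha Hd).
  - (* In the zero space every diameter vanishes, so D = 0 and any selection works. *)
    pose proof (no_unit_vector_norm_0 Hn) as Hz.
    assert (HDz : D = 0).
    { assert (D <= 0); [|lra]. apply (proj2 HD). intros r [i ->].
      apply (proj2 (Hlub i)). intros r (x & y & _ & _ & ->). rewrite Hz. lra. }
    destruct (choice (fun i x => S i x) Hne) as [x Hx].
    exists x. split; [exact Hx|]. intros k Hk. rewrite Hz, HDz, Rmult_0_r. lra.
Qed.
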